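(* Let $M$ be a pointed metric space and let $(m_{x_\alpha y_\alpha})_\alpha$ be a net of molecules in $\mathcal F(M)$ which converges weakly to the molecule $m_{xy}$ ($x\neq y$). Then $\lim_\alpha d(x_\alpha,x)=0$ and $\lim_\alpha d(y_\alpha,y)=0$.
   Context: A pointed metric space $M$ has a distinguished origin $0$. $\mathrm{Lip}_0(M)$ is the Banach space of real Lipschitz functions on $M$ vanishing at $0$ with the best Lipschitz constant as norm; $\delta(x)\in\mathrm{Lip}_0(M)^*$ is evaluation at $x$, and $\mathcal F(M)$ is the closed linear span of $\delta(M)$ in $\mathrm{Lip}_0(M)^*$, with $\mathcal F(M)^*=\mathrm{Lip}_0(M)$. For $x\neq y$ in $M$, the molecule is $m_{xy}=(\delta(x)-\delta(y))/d(x,y)$; all $x_\alpha\ne y_\alpha$. *)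

From Stdlib Require Import Reals.
Open Scope R_scope.

Definition is_metric {T : Type} (d : T -> T -> R) : Prop :=
  (forall x y, 0 <= d x y) /\
  (forall x y, d x y = 0 <-> x = y) /\
  (forall x y, d x y = d y x) /\
  (forall x y z, d x z <= d x y + d y z).

Definition Lip0 {T : Type} (d : T -> T -> R) (o : T) (f : T -> R) : Prop :=
  f o = 0 /\ exists L : R, forall x y, Rabs (f x - f y) <= L * d x y.

Definition directed {I : Type} (le : I -> I -> Prop) : Prop :=
  (exists i : I, True) /\
  (forall i, le i i) /\
  (forall i j k, le i j -> le j k -> le i k) /\
  (forall i j, exists k, le i k /\ le j k).

Definition net_lim {I : Type} (le : I -> I -> Prop) (a : I -> R) (l : R) : Prop :=
  forall eps, 0 < eps -> exists i0, forall i, le i0 i -> Rabs (a i - l) < eps.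

(* the duality pairing <f, m_xy> = (f x - f y) / d(x,y) of f in Lip_0(M)
   with the molecule m_xy in F(M) *)
Definition mol_pair {T : Type} (d : T -> T -> R) (f : T -> R) (x y : T) : R :=
  (f x - f y) / d x y.

(* the net of molecules (m_{xa i, ya i})_i converges weakly in F(M) to m_xy,
   i.e. <f, m_{xa i ya i}> -> <f, m_xy> for every f in F(M)^* = Lip_0(M) *)
Definition weak_conv_molecules {T I : Type} (d : T -> T -> R) (o : T)
  (le : I -> I -> Prop) (xa ya : I -> T) (x y : T) : Prop :=
  forall f : T -> R, Lip0 d o f ->
    net_lim le (fun i => mol_pair d f (xa i) (ya i)) (mol_pair d f x y).

(* Test the weak convergence against the 1-Lipschitz tent [z |-> max(0, r - d(z, x))]
   with [r <= d(x, y)]: it pairs with [m_xy] to [r / d(x, y) > 0], so eventually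
   [f (xa i) > f (ya i) >= 0], which forces [d (xa i) x < r]. Swapping the roles of
   the two endpoints (i.e. testing against [-f]) gives the claim for [ya]. *)

From Stdlib Require Import Reals Lra.
Open Scope R_scope.

Lemma Rmax0_lipschitz (a b : R) : Rabs (Rmax 0 a - Rmax 0 b) <= Rabs (a - b).
Proof.
  unfold Rmax; destruct (Rle_dec 0 a), (Rle_dec 0 b); apply Rabs_le;
    unfold Rabs; destruct (Rcase_abs (a - b)); lra.
Qed.

Lemma net_lim_eventually_gt0 (I : Type) (le : I -> I -> Prop) (a : I -> R) (l : R) :
  net_lim le a l -> 0 < l -> exists i0, forall i, le i0 i -> 0 < a i.
Proof.
  intros ha hl; destruct (ha l hl) as [i0 hi0]; exists i0; intros i hi.
  specialize (hi0 i hi); apply Rabs_def2 in hi0; lra.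
Qed.

Lemma mol_pair_gt0 (T : Type) (d : T -> T -> R) (f : T -> R) (u v : T) :
  0 < d u v -> 0 < mol_pair d f u v <-> f v < f u.
Proof.
  intro huv; unfold mol_pair; split; intro h.
  - assert (0 < (f u - f v) / d u v * d u v) by (apply Rmult_lt_0_compat; lra).
    replace ((f u - f v) / d u v * d u v) with (f u - f v) in * by (field; lra).
    lra.
  - apply Rdiv_lt_0_compat; lra.
Qed.

Section PointedMetricSpace.

Variables (T : Type) (d : T -> T -> R) (o : T).
Hypothesis hd : is_metric d.

Lemma dist_gt0 (u v : T) : u <> v -> 0 < d u v.
Proof.
  destruct hd as [h0 [h1 _]]; intro huv.
  destruct (h0 u v) as [|e]; [assumption | now elim huv; apply h1].
Qed.

Lemma dist_lipschitz_l (a b c : T) : Rabs (d a c - d b c) <= d a b.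
Proof.
  destruct hd as [_ [_ [hsym htri]]].
  pose proof (htri a b c); pose proof (htri b a c); rewrite (hsym b a) in *.
  apply Rabs_le; lra.
Qed.

Definition tent (c : T) (r : R) (z : T) : R := Rmax 0 (r - d z c).

Lemma tent_ge0 (c : T) (r : R) (z : T) : 0 <= tent c r z.
Proof. apply Rmax_l. Qed.

Lemma tent_center (c : T) (r : R) : 0 <= r -> tent c r c = r.
Proof.
  destruct hd as [_ [h1 _]]; intro hr; unfold tent.
  rewrite (proj2 (h1 c c) eq_refl), Rminus_0_r; now apply Rmax_right.
Qed.

Lemma tent_outside (c : T) (r : R) (z : T) : r <= d z c -> tent c r z = 0.
Proof. intro h; unfold tent; apply Rmax_left; lra. Qed.

Lemma tent_gt0 (c : T) (r : R) (z : T) : 0 < tent c r z -> d z c < r.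
Proof.
  unfold tent, Rmax; destruct Rle_dec; lra.
Qed.

Lemma tent_lipschitz (c : T) (r : R) (a b : T) :
  Rabs (tent c r a - tent c r b) <= 1 * d a b.
Proof.
  unfold tent; eapply Rle_trans; [apply Rmax0_lipschitz |].
  replace (r - d a c - (r - d b c)) with (- (d a c - d b c)) by ring.
  rewrite Rabs_Ropp, Rmult_1_l; apply dist_lipschitz_l.
Qed.

Lemma Lip0_tent (c : T) (r : R) : Lip0 d o (fun z => tent c r z - tent c r o).
Proof.
  split; [ring |]; exists 1; intros a b.
  replace (tent c r a - tent c r o - (tent c r b - tent c r o))
    with (tent c r a - tent c r b) by ring.
  apply tent_lipschitz.
Qed.

Lemma Lip0_opp (f : T -> R) : Lip0 d o f -> Lip0 d o (fun z => - f z).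
Proof.
  intros [hfo [L hL]]; split; [now rewrite hfo; ring |]; exists L; intros a b.
  replace (- f a - - f b) with (- (f a - f b)) by ring.
  now rewrite Rabs_Ropp.
Qed.

Lemma mol_pair_swap (f : T -> R) (u v : T) :
  mol_pair d f v u = mol_pair d (fun z => - f z) u v.
Proof.
  destruct hd as [_ [_ [hsym _]]]; unfold mol_pair; rewrite hsym.
  unfold Rdiv; ring.
Qed.

Variables (I : Type) (le : I -> I -> Prop).

Lemma weak_conv_molecules_swap (xa ya : I -> T) (x y : T) :
  weak_conv_molecules d o le xa ya x y -> weak_conv_molecules d o le ya xa y x.
Proof.
  intros hw f hf eps heps.
  destruct (hw _ (Lip0_opp f hf) eps heps) as [i0 hi0]; exists i0; intros i hi.
  rewrite (mol_pair_swap f (xa i) (ya i)), (mol_pair_swap f x y); exact (hi0 i hi).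
Qed.

Lemma weak_conv_molecules_fst (xa ya : I -> T) (x y : T) :
  x <> y -> (forall i, xa i <> ya i) -> weak_conv_molecules d o le xa ya x y ->
  net_lim le (fun i => d (xa i) x) 0.
Proof.
  intros hxy hne hw eps heps.
  set (r := Rmin eps (d x y)).
  pose proof (dist_gt0 x y hxy) as hxy0.
  assert (hr : 0 < r) by now apply Rmin_pos.
  set (f := fun z => tent x r z - tent x r o).
  assert (hfxy : f y < f x).
  { unfold f; rewrite tent_center, tent_outside; try lra.
    destruct hd as [_ [_ [hsym _]]]; rewrite hsym; apply Rmin_r. }
  pose proof (hw f (Lip0_tent x r)) as hlim.
  destruct (net_lim_eventually_gt0 _ _ _ _ hlim) as [i0 hi0].
  { now apply mol_pair_gt0. }
  exists i0; intros i hi.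
  specialize (hi0 i hi); apply mol_pair_gt0 in hi0; [| now apply dist_gt0].
  unfold f in hi0; pose proof (tent_ge0 x r (ya i)).
  assert (hclose : d (xa i) x < r) by (apply tent_gt0; lra).
  assert (r <= eps) by apply Rmin_l.
  destruct hd as [h0 _]; pose proof (h0 (xa i) x).
  rewrite Rminus_0_r, Rabs_right; lra.
Qed.

End PointedMetricSpace.

Theorem lemma2p2 (T : Type) (d : T -> T -> R) (o : T) (hd : is_metric d)
  (I : Type) (le : I -> I -> Prop) (hI : directed le)
  (xa ya : I -> T) (x y : T)
  (hxy : x <> y) (hne : forall i, xa i <> ya i)
  (hw : weak_conv_molecules d o le xa ya x y) :
  net_lim le (fun i => d (xa i) x) 0 /\ net_lim le (fun i => d (ya i) y) 0.
Proof.
  split.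
  - exact (weak_conv_molecules_fst T d o hd I le xa ya x y hxy hne hw).
  - apply (weak_conv_molecules_fst T d o hd I le ya xa y x).
    + now intro e; apply hxy.
    + now intros i e; apply (hne i).
    + now apply weak_conv_molecules_swap.
Qed.
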